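(* Let $\mathcal{D}=(D,<,\approx)$ with $D$ infinite and $<$ a strict total order, and let $l,r\in\mathbb{N}$. An $(l,r)$-symbolic model $\rho$ admits a model (i.e. is realized by some model $\sigma$) if and only if its local projection $\rho_l$ is realized by some local model and its remote projection $\rho_r$ is realized by some remote model.
   Context: The variable set is $V=V_{\mathrm{local}}\uplus V_{\mathrm{remote}}$, with both parts finite and disjoint. A model is an infinite sequence of maps $V\to D$. A local model is an infinite sequence of maps $V_{\mathrm{local}}\to D$, and a remote model is an infinite sequence of maps $V_{\mathrm{remote}}\to D$. Constraints and their semantics: - $\sigma,n\models \mathbf{X}^i x\approx\mathbf{X}^j y$ iff $\sigma(n+i)(x)=\sigma(n+j)(y)$. - $\sigma,n\models \mathbf{X}^i x<\mathbf{X}^j y$ iff $\sigma(n+i)(x)<\sigma(n+j)(y)$. - $\sigma,n\models\mathbf{X}^i(x\approx\mathbf{XF}y)$ iff there is $k>n+i$ with $\sigma(n+i)(x)=\sigma(k)(y)$. The constraint sets are defined as follows. - $\Omega^l$ is the set of all constraints $\mathbf{X}^ix\approx\mathbf{X}^jy$ and $\mathbf{X}^ix<\mathbf{X}^jy$ with $x,y\in V_{\mathrm{local}}$ and $i,j\in\{0,\dots,l\}$. - $\Omega^r$ is the set of all constraints $\mathbf{X}^ix\approx\mathbf{X}^jy$ and $\mathbf{X}^i(x\approx\mathbf{XF}y)$ with $x,y\in V_{\mathrm{remote}}$ and $i,j\in\{0,\dots,r\}$. An $l$-frame is a set $\{c\in\Omega^l:\sigma_l,0\models c\}$ for some local model $\sigma_l$.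 An $r$-frame is a set $FR\subseteq\Omega^r$ satisfying the following conditions, for all remote variables and all indices in $\{0,\dots,r\}$. 1. $\mathbf{X}^ix\approx\mathbf{X}^ix\in FR$. 2. $\mathbf{X}^ix\approx\mathbf{X}^jy\in FR$ iff $\mathbf{X}^jy\approx\mathbf{X}^ix\in FR$. 3. If $\mathbf{X}^ix\approx\mathbf{X}^jy$ and $\mathbf{X}^jy\approx\mathbf{X}^{j'}z$ are in $FR$, then $\mathbf{X}^ix\approx\mathbf{X}^{j'}z\in FR$. 4. Suppose $\mathbf{X}^ix\approx\mathbf{X}^jy\in FR$. - If $i=j$, then for all $z$: $\mathbf{X}^i(x\approx\mathbf{XF}z)\in FR$ iff $\mathbf{X}^j(y\approx\mathbf{XF}z)\in FR$. - If $i<j$, then $\mathbf{X}^i(x\approx\mathbf{XF}y)\in FR$. Moreover, for all $z$: $\mathbf{X}^i(x\approx\mathbf{XF}z)\in FR$ iff either $\mathbf{X}^j(y\approx\mathbf{XF}z)\in FR$ or $\mathbf{X}^ix\approx\mathbf{X}^{j'}z\in FR$ for some $i<j'\le j$. An $(l,r)$-frame is a set $FR^l\cup FR^r$ with $FR^l$ an $l$-frame and $FR^r$ an $r$-frame. Its local projection is $FR\cap\Omega^l$ and its remote projection is $FR\cap\Omega^r$. One-step consistency is defined as follows. - A pair $(FR_1,FR_2)$ of $l$-frames is one-step consistent if, for all $x,y$ and all $0<i,j\le l$: $\mathbf{X}^ix\approx\mathbf{X}^jy\in FR_1$ iff $\mathbf{X}^{i-1}x\approx\mathbf{X}^{j-1}y\in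 FR_2$, and $\mathbf{X}^ix<\mathbf{X}^jy\in FR_1$ iff $\mathbf{X}^{i-1}x<\mathbf{X}^{j-1}y\in FR_2$. - A pair of $r$-frames is one-step consistent if, for all $x,y$ and all $0<i,j\le r$: $\mathbf{X}^ix\approx\mathbf{X}^jy\in FR_1$ iff $\mathbf{X}^{i-1}x\approx\mathbf{X}^{j-1}y\in FR_2$, and $\mathbf{X}^i(x\approx\mathbf{XF}y)\in FR_1$ iff $\mathbf{X}^{i-1}(x\approx\mathbf{XF}y)\in FR_2$. - A pair of $(l,r)$-frames is one-step consistent if both the pair of local projections and the pair of remote projections are one-step consistent. An $(l,r)$-symbolic model is an infinite sequence $\rho$ of $(l,r)$-frames such that $(\rho(i),\rho(i+1))$ is one-step consistent for every $i$. Its local projection is $\rho_l(i)=\rho(i)\cap\Omega^l$ and its remote projection is $\rho_r(i)=\rho(i)\cap\Omega^r$. Realization is defined as follows. - A model $\sigma$ realizes $\rho$ iff $\rho(i)=\{c\in\Omega^l\cup\Omega^r:\sigma,i\models c\}$ for all $i$. - A local model $\sigma_l$ realizes $\rho_l$ iff $\rho_l(i)=\{c\in\Omega^l:\sigma_l,i\models c\}$ for all $i$. - A remote model $\sigma_r$ realizes $\rho_r$ iff $\rho_r(i)=\{c\in\Omega^r:\sigma_r,i\models c\}$ for all $i$. *)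

From mathcomp Require Import all_boot.
From Stdlib Require List.

Set Implicit Arguments.
Unset Strict Implicit.
Unset Printing Implicit Defensive.

(* CEq i x j y   :  X^i x ~ X^j y
   CLt i x j y   :  X^i x < X^j y
   CEqF i x y    :  X^i (x ~ XF y) *)
Inductive constr (X : Type) : Type :=
| CEq  of nat & X & nat & X
| CLt  of nat & X & nat & X
| CEqF of nat & X & X.

Arguments CEq {X}.
Arguments CLt {X}.
Arguments CEqF {X}.

Definition cmap (X Y : Type) (f : X -> Y) (c : constr X) : constr Y :=
  match c with
  | CEq i x j y => CEq i (f x) j (f y)
  | CLt i x j y => CLt i (f x) j (f y)
  | CEqF i x y => CEqF i (f x) (f y)
  end.

(* A (generic) model: an infinite sequence of valuations X -> D.
   The data equality ~ is equality on D. *)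
Definition sat (D : Type) (lt : D -> D -> Prop) (X : Type)
  (sigma : nat -> X -> D) (n : nat) (c : constr X) : Prop :=
  match c with
  | CEq i x j y => sigma (n + i) x = sigma (n + j) y
  | CLt i x j y => lt (sigma (n + i) x) (sigma (n + j) y)
  | CEqF i x y => exists k, n + i < k /\ sigma (n + i) x = sigma k y
  end.

(* Shapes of constraints allowed in Omega^l (resp. Omega^r), over the
   local (resp. remote) variables only. *)
Definition local_shape (X : Type) (l : nat) (c : constr X) : Prop :=
  match c with
  | CEq i _ j _ => i <= l /\ j <= l
  | CLt i _ j _ => i <= l /\ j <= l
  | CEqF _ _ _ => False
  end.

Definition remote_shape (X : Type) (r : nat) (c : constr X) : Prop :=
  match c with
  | CEq i _ j _ => i <= r /\ j <= r
  | CLt _ _ _ _ => False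
  | CEqF i _ _ => i <= r
  end.

Section Symb.
Variables (D : Type) (lt : D -> D -> Prop) (VL VR : finType).

Definition V : Type := (VL + VR)%type.

Definition cset := constr V -> Prop.

Definition Omega_l (l : nat) (c : constr V) : Prop :=
  exists c' : constr VL, c = cmap inl c' /\ local_shape l c'.

Definition Omega_r (r : nat) (c : constr V) : Prop :=
  exists c' : constr VR, c = cmap inr c' /\ remote_shape r c'.

Definition lframe (l : nat) (FR : cset) : Prop :=
  exists sigma_l : nat -> VL -> D,
    forall c, FR c <->
      exists c', c = cmap inl c' /\ local_shape l c' /\ sat lt sigma_l 0 c'.

Definition rframe (r : nat) (FR : cset) : Prop :=
  let EQ i x j y := FR (CEq i (@inr VL VR x) j (inr y)) in
  let EQF i x y := FR (CEqF i (@inr VL VR x) (inr y)) in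
  (forall c, FR c -> Omega_r r c) /\
  (forall x i, i <= r -> EQ i x i x) /\
  (forall x y i j, i <= r -> j <= r -> (EQ i x j y <-> EQ j y i x)) /\
  (forall x y z i j j', i <= r -> j <= r -> j' <= r ->
     EQ i x j y -> EQ j y j' z -> EQ i x j' z) /\
  (forall x y i j, i <= r -> j <= r -> EQ i x j y ->
     (i = j -> forall z, EQF i x z <-> EQF j y z) /\
     (i < j ->
        EQF i x y /\
        (forall z, EQF i x z <->
           (EQF j y z \/ exists j', i < j' <= j /\ EQ i x j' z)))).

Definition lrframe (l r : nat) (FR : cset) : Prop :=
  exists FRl FRr, lframe l FRl /\ rframe r FRr /\
    forall c, FR c <-> (FRl c \/ FRr c).

Definition proj_l (l : nat) (FR : cset) : cset := fun c => FR c /\ Omega_l l c.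
Definition proj_r (r : nat) (FR : cset) : cset := fun c => FR c /\ Omega_r r c.

Definition osc_l (l : nat) (FR1 FR2 : cset) : Prop :=
  forall (x y : VL) i j, 0 < i <= l -> 0 < j <= l ->
    (FR1 (CEq i (@inl VL VR x) j (inl y)) <->
       FR2 (CEq i.-1 (@inl VL VR x) j.-1 (inl y))) /\
    (FR1 (CLt i (@inl VL VR x) j (inl y)) <->
       FR2 (CLt i.-1 (@inl VL VR x) j.-1 (inl y))).

Definition osc_r (r : nat) (FR1 FR2 : cset) : Prop :=
  forall (x y : VR) i j, 0 < i <= r -> 0 < j <= r ->
    (FR1 (CEq i (@inr VL VR x) j (inr y)) <->
       FR2 (CEq i.-1 (@inr VL VR x) j.-1 (inr y))) /\
    (FR1 (CEqF i (@inr VL VR x) (inr y)) <->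
       FR2 (CEqF i.-1 (@inr VL VR x) (inr y))).

Definition osc_lr (l r : nat) (FR1 FR2 : cset) : Prop :=
  osc_l l (proj_l l FR1) (proj_l l FR2) /\
  osc_r r (proj_r r FR1) (proj_r r FR2).

Definition symbolic_model (l r : nat) (rho : nat -> cset) : Prop :=
  (forall n, lrframe l r (rho n)) /\
  (forall n, osc_lr l r (rho n) (rho n.+1)).

Definition realizes (l r : nat) (sigma : nat -> V -> D) (rho : nat -> cset) :=
  forall n c, rho n c <-> ((Omega_l l c \/ Omega_r r c) /\ sat lt sigma n c).

Definition realizes_l (l : nat) (sigma_l : nat -> VL -> D) (rho : nat -> cset) :=
  forall n c, proj_l l (rho n) c <->
    exists c', c = cmap inl c' /\ local_shape l c' /\ sat lt sigma_l n c'.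

Definition realizes_r (r : nat) (sigma_r : nat -> VR -> D) (rho : nat -> cset) :=
  forall n c, proj_r r (rho n) c <->
    exists c', c = cmap inr c' /\ remote_shape r c' /\ sat lt sigma_r n c'.

End Symb.

Definition strict_total_order (D : Type) (lt : D -> D -> Prop) : Prop :=
  (forall x, ~ lt x x) /\
  (forall x y z, lt x y -> lt y z -> lt x z) /\
  (forall x y, lt x y \/ x = y \/ lt y x).

Definition infinite_type (D : Type) : Prop :=
  forall s : list D, exists d, ~ List.In d s.

From mathcomp Require Import all_boot.

Set Implicit Arguments.
Unset Strict Implicit.
Unset Printing Implicit Defensive.

(* No constraint of Omega^l or Omega^r mentions a local and a remote variable
   at once, so a model realizes rho exactly when its restrictions to the local
   and to the remote variables realize the two projections of rho; conversely,
   a local and a remote model realizing the projections are glued into a model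
   by taking their copairing. *)

Lemma sat_cmap (D : Type) (lt : D -> D -> Prop) (X Y : Type) (f : X -> Y)
    (s : nat -> Y -> D) n (c : constr X) :
  sat lt s n (cmap f c) <-> sat lt (fun m x => s m (f x)) n c.
Proof. by case: c. Qed.

Section Realization.
Variables (D : Type) (lt : D -> D -> Prop) (VL VR : finType).

(* The left-hand side is the common unfolding of [realizes_l] and [realizes_r],
   with [f] the injection [inl] or [inr] into V. *)
Lemma realizes_along_iff (X : Type) (f : X -> V VL VR) (P : constr X -> Prop)
    (s : nat -> V VL VR -> D) (rho : nat -> cset VL VR) :
  (forall n c, (rho n c /\ exists c', c = cmap f c' /\ P c') <->
     exists c', c = cmap f c' /\ P c' /\ sat lt (fun m x => s m (f x)) n c') <->
  (forall n c, P c -> (rho n (cmap f c) <-> sat lt s n (cmap f c))).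
Proof.
split=> [Hs n c Pc | Hs n c]; last split.
- split=> [Hc | /sat_cmap Hc].
  + have [c' [Ec [_ /sat_cmap]]] :=
      proj1 (Hs n _) (conj Hc (ex_intro _ c (conj erefl Pc))).
    by rewrite Ec.
  + by case: (proj2 (Hs n (cmap f c)) (ex_intro _ c (conj erefl (conj Pc Hc)))).
- move=> [Hc [c' [Ec Pc']]]; exists c'; do 2!split=> //.
  by apply/sat_cmap; rewrite -Hs // -Ec.
- move=> [c' [Ec [Pc' /sat_cmap Hc]]]; split; last by exists c'.
  by rewrite Ec Hs.
Qed.

Lemma realizes_l_iff (l : nat) (s : nat -> V VL VR -> D) (rho : nat -> cset VL VR) :
  realizes_l lt l (fun m x => s m (inl x)) rho <->
  (forall n c, local_shape l c -> (rho n (cmap inl c) <-> sat lt s n (cmap inl c))).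
Proof. exact: realizes_along_iff. Qed.

Lemma realizes_r_iff (r : nat) (s : nat -> V VL VR -> D) (rho : nat -> cset VL VR) :
  realizes_r lt r (fun m x => s m (inr x)) rho <->
  (forall n c, remote_shape r c -> (rho n (cmap inr c) <-> sat lt s n (cmap inr c))).
Proof. exact: realizes_along_iff. Qed.

Lemma lrframe_sub_Omega (l r : nat) (FR : cset VL VR) c :
  lrframe lt l r FR -> FR c -> Omega_l l c \/ Omega_r r c.
Proof.
move=> [FRl [FRr [[sl Hl] [[Hr _] Heq]]]] /Heq [/Hl [c' [-> [Pc' _]]] | /Hr Hc].
- by left; exists c'.
- by right.
Qed.

Lemma realizesP (l r : nat) (s : nat -> V VL VR -> D) (rho : nat -> cset VL VR) :
  (forall n c, rho n c -> Omega_l l c \/ Omega_r r c) ->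
  realizes lt l r s rho <->
  realizes_l lt l (fun m x => s m (inl x)) rho /\
  realizes_r lt r (fun m x => s m (inr x)) rho.
Proof.
move=> HO; rewrite realizes_l_iff realizes_r_iff; split.
- move=> Hs; split=> n c Pc; rewrite Hs.
  + by split=> [[] | Hc] //; split=> //; left; exists c.
  + by split=> [[] | Hc] //; split=> //; right; exists c.
- move=> [Hl Hr] n c; split=> [Hc | [[[c' [-> Pc']] | [c' [-> Pc']]] Hc]].
  + split; first exact: HO Hc.
    by case: (HO _ _ Hc) => [[c' [Ec Pc']] | [c' [Ec Pc']]];
      move: Hc; rewrite Ec ?Hl ?Hr.
  + by rewrite Hl.
  + by rewrite Hr.
Qed.

End Realization.

Definition copair (A B C : Type) (f : nat -> A -> C) (g : nat -> B -> C) :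
    nat -> A + B -> C :=
  fun m v => match v with inl x => f m x | inr y => g m y end.

Theorem lemma2p1p1 (D : Type) (lt : D -> D -> Prop)
  (Hord : strict_total_order lt) (Hinf : infinite_type D)
  (VL VR : finType) (l r : nat) (rho : nat -> cset VL VR)
  (Hrho : symbolic_model lt l r rho) :
  (exists sigma : nat -> V VL VR -> D, realizes lt l r sigma rho) <->
  ((exists sigma_l : nat -> VL -> D, realizes_l lt l sigma_l rho) /\
   (exists sigma_r : nat -> VR -> D, realizes_r lt r sigma_r rho)).
Proof.
have HO n c : rho n c -> Omega_l l c \/ Omega_r r c.
  exact: lrframe_sub_Omega (proj1 Hrho n).
split=> [[s /(realizesP lt s HO) [Hl Hr]] | [[sl Hl] [sr Hr]]].
- by split; eexists; eassumption.
- by exists (copair sl sr); apply/(realizesP lt _ HO).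
Qed.
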